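(* Let $n\ge2$, $m=3$, $r=1$, and $E_1\ge E_2\ge\dots\ge E_n>0$. Define $$U_i=\frac{i}{\frac{3}{E_1}+\sum_{k=2}^i\frac1{E_k}}\ (1\le i\le n),\qquad V_i=\frac{i-1}{\sum_{k=1}^i\frac1{E_k}}\ (2\le i\le n),$$ let $u$ be the least index in $\arg\max_{1\le i\le n}U_i$ and $v$ the least index in $\arg\max_{2\le i\le n}V_i$. If $V_v>U_u$, then $\mathbf{p}^*$ with $p^*_k=\frac{1/E_k}{\sum_{j=1}^v1/E_j}$ for $k\le v$ and $p^*_k=0$ for $k>v$ maximizes $f^{\mathrm{worst}}$ over $\mathcal{I}$. If $U_u\ge V_v$, then $\mathbf{p}^*$ with $p^*_1=\frac{3/E_1}{3/E_1+\sum_{j=2}^u1/E_j}$, $p^*_k=\frac{1/E_k}{3/E_1+\sum_{j=2}^u1/E_j}$ for $2\le k\le u$, and $p^*_k=0$ for $k>u$, maximizes $f^{\mathrm{worst}}$ over $\mathcal{I}$. In both cases the optimal value $\max_{\mathbf{p}\in\mathcal{I}}f^{\mathrm{worst}}(\mathbf{p})$ equals $\max\{U_u,V_v\}$.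
   Context: $\mathcal{I}=\{\mathbf{p}\in[0,1]^n:\sum_kp_k=1\}$; $\mathcal{J}_2=\{\mathbf{x}\in\{0,1,2\}^n:\sum_jx_j=2\}$; $f(\mathbf{p},\mathbf{x})=\sum_k\frac{E_kp_k}{1+x_k}$; $f^{\mathrm{worst}}(\mathbf{p})=\min_{\mathbf{x}\in\mathcal{J}_2}f(\mathbf{p},\mathbf{x})$. *)

(* R is an arbitrary realFieldType. Indices 1..n of the
   paper are 'I_n (0-based): paper index k corresponds to k-1. *)
From mathcomp Require Import all_boot all_order all_algebra.
Set Implicit Arguments. Unset Strict Implicit. Unset Printing Implicit Defensive.
Import Order.TTheory GRing.Theory Num.Theory.
Local Open Scope ring_scope.

Definition inI (R : realFieldType) (n : nat) (p : 'I_n -> R) : Prop :=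
  (forall k, 0 <= p k <= 1) /\ \sum_(k < n) p k = 1.

Definition J2 (n : nat) : {pred {ffun 'I_n -> 'I_3}} :=
  fun x => (\sum_(j < n) (x j : nat))%N == 2%N.

Definition fval (R : realFieldType) (n : nat) (E p : 'I_n -> R)
  (x : {ffun 'I_n -> 'I_3}) : R :=
  \sum_(k < n) E k * p k / (1 + (x k : nat)%:R).

Definition x0 (n : nat) : {ffun 'I_n -> 'I_3} :=
  [ffun i => if val i == 0%N then inord 2 else inord 0].

(* f^worst(p) = min_{x in J2} f(p, x)  (x0 lies in J2 whenever n >= 1) *)
Definition fworst (R : realFieldType) (n : nat) (E p : 'I_n -> R) : R :=
  \big[Num.min/fval E p (x0 n)]_(x : {ffun 'I_n -> 'I_3} | @J2 n x) fval E p x.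

Definition U (R : realFieldType) (n : nat) (E : 'I_n -> R) (i : 'I_n) : R :=
  (val i).+1%:R /
    \sum_(k < n | (val k <= val i)%N) (if val k == 0%N then 3 else 1) / E k.

Definition V (R : realFieldType) (n : nat) (E : 'I_n -> R) (i : 'I_n) : R :=
  (val i)%:R / \sum_(k < n | (val k <= val i)%N) 1 / E k.

Definition pV (R : realFieldType) (n : nat) (E : 'I_n -> R) (v : 'I_n)
  (k : 'I_n) : R :=
  if (val k <= val v)%N
  then (1 / E k) / \sum_(j < n | (val j <= val v)%N) 1 / E j
  else 0.

Definition pU (R : realFieldType) (n : nat) (E : 'I_n -> R) (u : 'I_n)
  (k : 'I_n) : R :=
  if (val k <= val u)%N
  then ((if val k == 0%N then 3 else 1) / E k) /
       \sum_(j < n | (val j <= val u)%N) (if val j == 0%N then 3 else 1) / E j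
  else 0.

(* For a candidate p, the products E_k p_k equal a common level b on the
   support (3b at the first index for pU); a vector x in J_2 lowers a level-b
   term by at most x_k b/2 and the 3b term by at most x_k b/2 + b, which
   leaves exactly V_v (resp. U_u).
   Conversely, for q in the simplex and mu = max(U_u, V_v), put a_k = E_k q_k
   and g_k = 1 - mu/E_k, so that sum a_k - mu = sum a_k g_k.  As g is
   nonincreasing, its positive part lives on a prefix, where U_i <= mu and
   V_i <= mu give sum g^+ <= 1 and 2 g_m + sum g^+ <= 2 whenever g_m > 0.
   If a_m >= a_s are the two largest a_k, this bounds sum a_k g_k by
   max(2 a_m / 3, (a_m + a_s) / 2): the loss of f at x = 2e_m or x = e_m + e_s. *)

From mathcomp Require Import all_boot all_order all_algebra.
From mathcomp Require Import ring lra.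
Import Order.TTheory GRing.Theory Num.Theory.
Set Implicit Arguments. Unset Strict Implicit. Unset Printing Implicit Defensive.
Local Open Scope ring_scope.

Lemma sum1_prefix (R : realFieldType) (n : nat) (i : 'I_n) :
  \sum_(k < n | (val k <= val i)%N) (1 : R) = (val i).+1%:R.
Proof.
rewrite (eq_bigl (fun k : 'I_n => (val k < (val i).+1)%N)) => [|k]; last first.
  by rewrite ltnS.
by rewrite (big_ord_narrow (F := fun _ => (1 : R)) (ltn_ord i)) sumr_const card_ord.
Qed.

Lemma sum_prefix_at0 (R : realFieldType) (n : nat) (i k0 : 'I_n) (F : 'I_n -> R) :
  val k0 = 0%N ->
  \sum_(k < n | (val k <= val i)%N) (if val k == 0%N then F k else 0) = F k0.
Proof.
move=> k00; rewrite (bigD1 k0) ?k00 //= ?eqxx big1 ?addr0 // => k /andP[_ kk0].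
by case: eqP => // k0E; case/eqP: kk0; apply: val_inj; rewrite k00.
Qed.

Section WorstCase.
Variables (R : realFieldType) (n : nat) (E p : 'I_n -> R).

Lemma fworst_le_fval x : J2 x -> fworst E p <= fval E p x.
Proof. by move=> Jx; rewrite /fworst (bigD1 x) //= ge_min lexx. Qed.

Lemma J2_x0 : (0 < n)%N -> J2 (x0 n).
Proof.
move=> n_gt0; rewrite /J2 (bigD1 (Ordinal n_gt0)) //= ffunE eqxx inordK //.
rewrite big1 // => i i_neq0; rewrite ffunE ifF ?inordK //.
by apply: contraNF i_neq0 => /eqP i0; apply/eqP/val_inj.
Qed.

Lemma le_fworst (M : R) : (0 < n)%N ->
  (forall x, J2 x -> M <= fval E p x) -> M <= fworst E p.
Proof.
move=> n_gt0 lb; apply: (big_ind (fun y => M <= y)); last by move=> x /lb.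
- exact/lb/J2_x0.
- by move=> y z My Mz; rewrite le_min My Mz.
Qed.

Definition xdouble (m : 'I_n) : {ffun 'I_n -> 'I_3} :=
  [ffun i => if i == m then inord 2 else inord 0].

Definition xpair (m s : 'I_n) : {ffun 'I_n -> 'I_3} :=
  [ffun i => if (i == m) || (i == s) then inord 1 else inord 0].

Lemma J2_xdouble m : J2 (xdouble m).
Proof.
rewrite /J2 (bigD1 m) //= ffunE eqxx inordK // big1 // => i /negbTE im.
by rewrite ffunE im inordK.
Qed.

Lemma J2_xpair m s : m != s -> J2 (xpair m s).
Proof.
move=> ms; rewrite /J2 (bigD1 m) //= (bigD1 s) 1?eq_sym //=.
rewrite !ffunE !eqxx orbT !inordK // big1 // => i /andP[/negbTE im /negbTE i_s].
by rewrite ffunE im i_s inordK.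
Qed.

Lemma fval_xdouble m :
  fval E p (xdouble m) = \sum_k E k * p k - 2 / 3 * (E m * p m).
Proof.
rewrite /fval (bigD1 m) //= [in RHS](bigD1 m) //= ffunE eqxx inordK //.
rewrite (eq_bigr (fun k => E k * p k)) => [|i /negbTE im]; first by field.
by rewrite ffunE im inordK // addr0 divr1.
Qed.

Lemma fval_xpair m s : m != s ->
  fval E p (xpair m s) = \sum_k E k * p k - (E m * p m + E s * p s) / 2.
Proof.
move=> ms; rewrite /fval (bigD1 m) //= [in RHS](bigD1 m) //=.
rewrite (bigD1 s) 1?eq_sym //= [in RHS](bigD1 s) 1?eq_sym //=.
rewrite !ffunE !eqxx orbT /= inordK //.
rewrite (eq_bigr (fun k => E k * p k)) => [|i /andP[/negbTE im /negbTE i_s]].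
  by field.
by rewrite ffunE im i_s inordK // addr0 divr1.
Qed.

Lemma fworst_le_top_two m s : m != s ->
  fworst E p <= \sum_k E k * p k
                - Num.max (2 / 3 * (E m * p m)) ((E m * p m + E s * p s) / 2).
Proof.
move=> ms; have := fworst_le_fval (J2_xdouble m).
have := fworst_le_fval (J2_xpair ms).
rewrite fval_xdouble fval_xpair //.
by case: (leP (2 / 3 * (E m * p m)) ((E m * p m + E s * p s) / 2)).
Qed.

End WorstCase.

Definition ptrunc (R : realFieldType) (n : nat) (w : 'I_n -> R) (t k : 'I_n) : R :=
  if (val k <= val t)%N then w k / \sum_(j < n | (val j <= val t)%N) w j else 0.

Lemma inI_ptrunc (R : realFieldType) (n : nat) (w : 'I_n -> R) (t : 'I_n) :
  (forall k, 0 < w k) -> inI (ptrunc w t).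
Proof.
move=> w_gt0; rewrite /ptrunc; set S := \sum_(j < n | _) _.
have le_wS k : (val k <= val t)%N -> w k <= S.
  move=> kt; rewrite /S (bigD1 k) //= lerDl.
  by apply: sumr_ge0 => i _; apply: ltW.
have S_gt0 : 0 < S by apply: lt_le_trans (w_gt0 t) (le_wS t (leqnn _)).
split=> [k|].
  case: ifP => kt; last by rewrite lexx ler01.
  by rewrite divr_ge0 ?(ltW (w_gt0 k)) ?(ltW S_gt0) //= ler_pdivrMr // mul1r le_wS.
by rewrite -big_mkcond /= -mulr_suml divff // gt_eqF.
Qed.

Lemma mul_div_1Sx_ge (R : realFieldType) (b c : R) (x : 'I_3) :
  0 <= b -> 1 <= c <= 3 ->
  (c + 1) / 2 * b - (x : nat)%:R * b / 2 <= c * b / (1 + (x : nat)%:R).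
Proof.
move=> b_ge0 /andP[c_ge1 c_le3].
case: x => [[|[|[|]]] //= _]; rewrite ?mul0r ?subr0 ?addr0 ?divr1.
- by nra.
- by rewrite ler_pdivlMr; nra.
- by rewrite ler_pdivlMr; nra.
Qed.

Lemma le_fworst_ptrunc (R : realFieldType) (n : nat) (E c : 'I_n -> R) (t : 'I_n) :
  (forall k, 0 < E k) -> (forall k, 1 <= c k <= 3) ->
  (\sum_(k < n | (val k <= val t)%N) (c k + 1) / 2 - 1)
    / \sum_(k < n | (val k <= val t)%N) c k / E k
  <= fworst E (ptrunc (fun k => c k / E k) t).
Proof.
move=> E_gt0 c13; set D := \sum_(k < n | _) c k / E k.
have D_gt0 : 0 < D.
  rewrite /D (bigD1 t) //=; apply: ltr_pwDl.
    by case/andP: (c13 t) => c1 _; rewrite divr_gt0 ?(lt_le_trans ltr01 c1).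
  apply: sumr_ge0 => k _; case/andP: (c13 k) => c1 _.
  by rewrite divr_ge0 ?(le_trans ler01 c1) ?(ltW (E_gt0 k)).
pose b := D^-1.
have b_ge0 : 0 <= b by rewrite invr_ge0 ltW.
have Ep k : E k * ptrunc (fun k => c k / E k) t k =
            if (val k <= val t)%N then c k * b else 0.
  rewrite /ptrunc -/D; case: ifP => _; last by rewrite mulr0.
  by rewrite /b; field; rewrite !gt_eqF.
apply: le_fworst; first exact: leq_ltn_trans (leq0n _) (ltn_ord t).
move=> x Jx; rewrite /fval.
pose h k := (if (val k <= val t)%N then (c k + 1) / 2 * b else 0)
            - (x k : nat)%:R * b / 2.
apply: (@le_trans _ _ (\sum_k h k)); last first.
  apply: ler_sum => k _; rewrite Ep /h; case: ifP => _.
    exact: mul_div_1Sx_ge.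
  by rewrite mul0r add0r oppr_le0 divr_ge0 ?mulr_ge0.
have sum_x : \sum_k (x k : nat)%:R * b / 2 = b.
  by rewrite -!mulr_suml -natr_sum (eqP Jx); field.
rewrite /h sumrB sum_x -big_mkcond /= -(mulr_suml _ _ _ b) /b.
by rewrite mulrBl mul1r.
Qed.

Lemma exists_top_two d (T : orderType d) (n : nat) (a : 'I_n -> T) :
  (1 < n)%N ->
  exists m s : 'I_n,
    [/\ m != s, forall k, (a k <= a m)%O & forall k, k != m -> (a k <= a s)%O].
Proof.
move=> n_gt1; have n_gt0 : (0 < n)%N by apply: ltnW.
have [m _ a_m] := @arg_maxP _ _ _ (Ordinal n_gt0) predT a isT.
have [k1 k1m] : exists k1 : 'I_n, k1 != m.
  have [m0|] := eqVneq m (Ordinal n_gt0); last first.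
    by exists (Ordinal n_gt0); rewrite eq_sym.
  by exists (Ordinal n_gt1); rewrite m0; apply/eqP => /(congr1 val).
have [s sm a_s] := @arg_maxP _ _ _ k1 (fun k => k != m) a k1m.
by exists m, s; split=> [|k|k]; [rewrite eq_sym | exact: a_m | exact: a_s].
Qed.

Lemma sum_pos_part_prefix (R : realDomainType) (n : nat) (g : 'I_n -> R) :
  (forall i k : 'I_n, (val i <= val k)%N -> g k <= g i) ->
  (forall k, g k <= 0) \/
  exists i : 'I_n,
    \sum_k Num.max (g k) 0 = \sum_(k < n | (val k <= val i)%N) g k.
Proof.
move=> g_noninc; have [k0 gk0|g_le0] := pickP (fun k => 0 < g k); last first.
  by left=> k; rewrite leNgt g_le0.
right; have [i gi i_max] := @arg_maxnP _ k0 (fun k => 0 < g k) val gk0.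
exists i; rewrite (bigID (fun k : 'I_n => (val k <= val i)%N)) /=.
rewrite [X in _ + X]big1 ?addr0 => [|k]; last first.
  rewrite -ltnNge => ik; apply: max_r; rewrite leNgt.
  by apply: contraTN ik => /i_max; rewrite -leqNgt.
apply: eq_bigr => k ki; apply: max_l; apply: ltW.
exact: lt_le_trans gi (g_noninc _ _ ki).
Qed.

Lemma sum_mul_le_top_two (R : realDomainType) (n : nat) (a g : 'I_n -> R)
    (m s : 'I_n) :
  (forall k, 0 <= a k) -> (forall k, k != m -> a k <= a s) ->
  \sum_k a k * g k <= a m * g m + a s * \sum_(k | k != m) Num.max (g k) 0.
Proof.
move=> a_ge0 a_s; rewrite (bigD1 m) //= lerD2l mulr_sumr; apply: ler_sum => k km.
have g_le : g k <= Num.max (g k) 0 by rewrite le_max lexx.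
apply: le_trans (ler_wpM2l (a_ge0 k) g_le) _.
by apply: ler_wpM2r (a_s k km); rewrite le_max lexx orbT.
Qed.

Lemma top_two_bound (R : realFieldType) (am as_ gam G : R) :
  0 <= as_ -> as_ <= am -> 0 <= G -> Num.max gam 0 + G <= 1 ->
  (0 < gam -> 2 * gam + (Num.max gam 0 + G) <= 2) ->
  am * gam + as_ * G <= Num.max (2 / 3 * am) ((am + as_) / 2).
Proof.
move=> as_ge0 as_le G_ge0; have [gam_le0|gam_gt0] := lerP gam 0.
  rewrite add0r => G_le1 _; rewrite le_max; apply/orP; right; nra.
move=> P1 /(_ isT) P2; rewrite le_max; apply/orP.
by have [am_le|as_lt] := lerP (am / 3) as_; [right | left]; nra.
Qed.

Definition excess (R : realFieldType) (n : nat) (E : 'I_n -> R) (mu : R)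
  (k : 'I_n) : R := 1 - mu / E k.

Section Excess.
Variables (R : realFieldType) (n : nat) (E : 'I_n -> R) (mu : R).
Hypotheses (E_gt0 : forall k, 0 < E k) (mu_ge0 : 0 <= mu).
Hypothesis E_noninc : forall i j : 'I_n, (val i <= val j)%N -> E j <= E i.

Local Notation g := (excess E mu).

Lemma excess_noninc (i k : 'I_n) : (val i <= val k)%N -> g k <= g i.
Proof.
move=> ik; rewrite lerD2l lerN2 ler_wpM2l // lef_pV2 ?posrE //.
exact: E_noninc.
Qed.

Lemma sum_excess_prefix (i : 'I_n) :
  \sum_(k < n | (val k <= val i)%N) g k
  = (val i).+1%:R - mu * \sum_(k < n | (val k <= val i)%N) 1 / E k.
Proof.
rewrite sumrB sum1_prefix mulr_sumr; congr (_ - _).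
by apply: eq_bigr => k _; rewrite mul1r.
Qed.

Lemma sum_excess_prefix_le1 (i : 'I_n) :
  V E i <= mu -> \sum_(k < n | (val k <= val i)%N) g k <= 1.
Proof.
have S_gt0 : 0 < \sum_(k < n | (val k <= val i)%N) 1 / E k.
  rewrite (bigD1 i) //= ltr_pwDl ?divr_gt0 //.
  by apply: sumr_ge0 => k _; rewrite divr_ge0 ?ltW.
rewrite /V ler_pdivrMr // sum_excess_prefix -natr1; lra.
Qed.

Lemma sum_excess_prefix_le2 (i k0 : 'I_n) : val k0 = 0%N ->
  U E i <= mu -> 2 * g k0 + \sum_(k < n | (val k <= val i)%N) g k <= 2.
Proof.
move=> k00; pose S := \sum_(k < n | (val k <= val i)%N) 1 / E k.
have S_ge0 : 0 <= S by apply: sumr_ge0 => k _; rewrite divr_ge0 ?ltW.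
rewrite /U; have -> : \sum_(k < n | (val k <= val i)%N)
                        (if val k == 0%N then 3 else 1) / E k = S + 2 / E k0.
  rewrite -(sum_prefix_at0 i (fun k => 2 / E k) k00) -big_split /=.
  by apply: eq_bigr => k _; case: ifP => _; rewrite ?addr0 //; field; rewrite gt_eqF.
have D_gt0 : 0 < S + 2 / E k0 by rewrite ltr_wpDl ?divr_gt0.
rewrite ler_pdivrMr // sum_excess_prefix -/S /excess -natr1.
have -> : mu * (S + 2 / E k0) = mu * S + 2 * (mu / E k0) by ring.
lra.
Qed.

Lemma sum_pos_excess_le1 :
  (forall i, V E i <= mu) -> \sum_k Num.max (g k) 0 <= 1.
Proof.
move=> V_le; have [g_le0|[i ->]] := sum_pos_part_prefix excess_noninc.
  by rewrite big1 ?ler01 // => k _; apply: max_r.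
exact: sum_excess_prefix_le1.
Qed.

Lemma sum_pos_excess_le2 (m : 'I_n) : (forall i, U E i <= mu) ->
  0 < g m -> 2 * g m + \sum_k Num.max (g k) 0 <= 2.
Proof.
move=> U_le gm_gt0; pose k0 := Ordinal (leq_ltn_trans (leq0n m) (ltn_ord m)).
have [g_le0|[i ->]] := sum_pos_part_prefix excess_noninc.
  by have := g_le0 m; rewrite leNgt gm_gt0.
have gm_le := @excess_noninc k0 m (leq0n _).
have := @sum_excess_prefix_le2 i k0 erefl (U_le i); lra.
Qed.

Lemma fworst_le_of_UV_le (q : 'I_n -> R) : (1 < n)%N ->
  (forall i, U E i <= mu) -> (forall i, V E i <= mu) -> inI q ->
  fworst E q <= mu.
Proof.
move=> n_gt1 U_le V_le [q01 q_sum1]; pose a k := E k * q k.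
have a_ge0 k : 0 <= a k.
  by case/andP: (q01 k) => q_ge0 _; rewrite mulr_ge0 ?(ltW (E_gt0 k)).
have [m [s [ms a_m a_s]]] := exists_top_two a n_gt1.
have sum_a_sub : \sum_k a k - mu = \sum_k a k * g k.
  rewrite -[in LHS](mulr1 mu) -q_sum1 mulr_sumr -sumrB; apply: eq_bigr => k _.
  by rewrite /a /excess; field; rewrite gt_eqF.
have G_ge0 : 0 <= \sum_(k | k != m) Num.max (g k) 0.
  by apply: sumr_ge0 => k _; rewrite le_max lexx orbT.
have P1 := sum_pos_excess_le1 V_le.
have P2 := @sum_pos_excess_le2 m U_le.
rewrite (bigD1 m) //= in P1 P2.
have := top_two_bound (a_ge0 s) (a_m s) G_ge0 P1 P2.
have := sum_mul_le_top_two g a_ge0 a_s.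
have := fworst_le_top_two E q ms.
lra.
Qed.

End Excess.

Section Candidates.
Variables (R : realFieldType) (n : nat) (E : 'I_n -> R).
Hypothesis E_gt0 : forall k, 0 < E k.

Lemma inI_pV v : inI (pV E v).
Proof. by apply: inI_ptrunc => k; rewrite divr_gt0. Qed.

Lemma inI_pU u : inI (pU E u).
Proof. by apply: inI_ptrunc => k; rewrite divr_gt0 //; case: ifP. Qed.

Lemma V_le_fworst_pV v : V E v <= fworst E (pV E v).
Proof.
apply: le_trans (le_fworst_ptrunc (c := fun=> 1) v E_gt0 _) => [|k]; last first.
  by rewrite lexx ler1n.
rewrite (eq_bigr (fun=> 1)) => [|k _]; last by field.
by rewrite sum1_prefix -natr1 addrK.
Qed.

Lemma U_le_fworst_pU u : U E u <= fworst E (pU E u).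
Proof.
pose c (k : 'I_n) : R := if val k == 0%N then 3 else 1.
have c13 (k : 'I_n) : 1 <= c k <= 3.
  by rewrite /c; case: ifP => _; rewrite ?lexx ?ler1n.
apply: le_trans (le_fworst_ptrunc (c := c) u E_gt0 c13).
rewrite (eq_bigr (fun k => 1 + if val k == 0%N then 1 else 0)) => [|k _]; last first.
  by rewrite /c; case: ifP => _; field.
pose k0 := Ordinal (leq_ltn_trans (leq0n u) (ltn_ord u)).
by rewrite big_split /= sum1_prefix (@sum_prefix_at0 _ _ u k0) // addrK.
Qed.

End Candidates.

Theorem theorem3 (R : realFieldType) (n : nat) (E : 'I_n -> R)
  (hn : (2 <= n)%N)
  (Epos : forall k : 'I_n, 0 < E k)
  (Edec : forall i j : 'I_n, (val i <= val j)%N -> E j <= E i)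
  (u v : 'I_n)
  (u_max : forall i : 'I_n, U E i <= U E u)
  (u_least : forall i : 'I_n, U E i = U E u -> (val u <= val i)%N)
  (v_ge : (1 <= val v)%N)
  (v_max : forall i : 'I_n, (1 <= val i)%N -> V E i <= V E v)
  (v_least : forall i : 'I_n, (1 <= val i)%N -> V E i = V E v ->
               (val v <= val i)%N) :
  (U E u < V E v ->
     inI (pV E v) /\
     (forall q : 'I_n -> R, inI q -> fworst E q <= fworst E (pV E v)) /\
     fworst E (pV E v) = Num.max (U E u) (V E v)) /\
  (V E v <= U E u ->
     inI (pU E u) /\
     (forall q : 'I_n -> R, inI q -> fworst E q <= fworst E (pU E u)) /\
     fworst E (pU E u) = Num.max (U E u) (V E v)).
Proof.
have V_ge0 : 0 <= V E v.
  by rewrite divr_ge0 // sumr_ge0 // => k _; rewrite divr_ge0 ?ltW.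
set mu := Num.max (U E u) (V E v).
have mu_ge0 : 0 <= mu by rewrite le_max V_ge0 orbT.
have U_le i : U E i <= mu by rewrite le_max u_max.
have V_le i : V E i <= mu.
  have [i0|i_gt0] := posnP (val i); last by rewrite le_max v_max ?orbT.
  by rewrite /V i0 mul0r.
have opt q := @fworst_le_of_UV_le _ _ _ _ Epos mu_ge0 Edec q hn U_le V_le.
have opt_at p : inI p -> mu <= fworst E p ->
    inI p /\ (forall q, inI q -> fworst E q <= fworst E p) /\ fworst E p = mu.
  move=> Ip mu_le; have p_opt : fworst E p = mu by apply/eqP; rewrite eq_le opt.
  by rewrite p_opt; split; [|split] => // q /opt.
split=> [UV|VU].
- by apply: opt_at (inI_pV Epos v) _; rewrite /mu (max_r (ltW UV)) V_le_fworst_pV.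
- by apply: opt_at (inI_pU Epos u) _; rewrite /mu (max_l VU) U_le_fworst_pU.
Qed.
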